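(* Let $m\ge2$, $K$ an algebraic number field, $a(z)\in K[z]$ monic of degree $m$, $b(z)\in K[z]$ of degree $\le m-1$ with $z^{m-1}$-coefficient $b_{m-1}$, with $a(z)=\prod_{i=1}^m(z-\alpha_i)$, $\alpha_i\in K$ pairwise distinct, $s_i:=b(\alpha_i)/a'(\alpha_i)\in\mathbb{Q}\setminus\mathbb{Z}_{\le-1}$, $b_{m-1}\notin\mathbb{Z}_{<-1}$. Let $v$ be an Archimedean place of $K$ and put $c_v(\boldsymbol\alpha)=\sum_{i=1}^m\mathrm{h}_v(\alpha_i)+m\log|4|_v$. Then, as $n\to\infty$, \[\log\max_{0\le\ell\le m-1}\{\|P_{n,\ell}\|_v\}\le n\,c_v(\boldsymbol\alpha)+o(n).\]
   Context: $P_{n,\ell}(z)=\frac1{n!}(\frac{d}{dz}+\frac{b(z)}{a(z)})^n(a(z)^nz^\ell)$ (operator applied $n$ times; a polynomial). For $R=\sum_kr_kz^k$, $\|R\|_v=\max_k|r_k|_v$. For Archimedean $v$ with embedding $\iota_v$, $|x|_v=|\iota_v(x)|^{[K_v:\mathbb{R}]/[K:\mathbb{Q}]}$; $\mathrm{h}_v(\alpha)=\log\max\{1,|\alpha|_v\}$. $o(n)$ denotes a quantity $g(n)$ with $g(n)/n\to0$. *)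

From HB Require Import structures.
From mathcomp Require Import all_boot all_order all_algebra all_field.
From mathcomp Require Import boolp classical_sets reals exp.
From mathcomp Require Import complex.
Set Implicit Arguments. Unset Strict Implicit. Unset Printing Implicit Defensive.
Import Order.TTheory GRing.Theory Num.Theory.
Local Open Scope ring_scope.

Section Defs.
Variable R : realType.
Variable K : fieldExtType rat.

(* [K_v : R] for the Archimedean place v given by the embedding iota *)
Definition local_deg (iota : {rmorphism K -> R[i]}) : nat :=
  if `[< forall x : K, complex.Im (iota x) = 0 >] then 1%N else 2%N.

Definition place_exp (iota : {rmorphism K -> R[i]}) : R :=
  (local_deg iota)%:R / (\dim {:K})%:R.

(* |x|_v = |iota_v(x)|^([K_v:R]/[K:Q]); `|.| is the complex modulus in R[i], real-valued, and Re extracts it *)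
Definition absv (iota : {rmorphism K -> R[i]}) (x : K) : R :=
  complex.Re `|iota x| `^ place_exp iota.

Definition hv (iota : {rmorphism K -> R[i]}) (x : K) : R :=
  ln (Num.max 1 (absv iota x)).

Definition polyabsv (iota : {rmorphism K -> R[i]}) (p : {poly K}) : R :=
  \big[Num.max/0]_(k < size p) absv iota p`_k.
End Defs.

(* The operator F |-> d/dz F + (b/a) F, on polynomials F; it is only applied to
   polynomials F divisible by a (namely a^(n-k) * ... with k < n), so the
   division below is exact. *)
Definition opDb (K : fieldType) (a b : {poly K}) (F : {poly K}) : {poly K} :=
  F^`() + (b * F) %/ a.

Definition Pnl (K : fieldType) (a b : {poly K}) (n l : nat) : {poly K} :=
  (n`!)%:R^-1 *: iter n (opDb a b) (a ^+ n * 'X^l).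

(* Write (d/dz + b/a)^k (a^n z^l) = a^(n-k) G_k.  The G_k are built from a and b
   by sums, products and derivatives only, so coefficientwise majorization
   passes through them: after embedding K into C they are majorized by the
   cofactors built from A = prod_i (z + g_i), g_i = max(1, |alpha_i|), in place
   of a and from S A' in place of b, where the integer S bounds the
   coefficients of b.  For b = S A' the operator is conjugate to d/dz by A^S,
   so n! P_(n,l) is majorized by the n-th derivative of A^(n+S) z^l, whose
   coefficients divided by n! are at most A(1)^(n+S) 2^deg.  As
   A(1) = prod_i (1 + g_i) <= 2^m prod_i g_i, taking logarithms gives
   n (sum_i h_v(alpha_i) + m log|4|_v) + O(1). *)

From HB Require Import structures.
From mathcomp Require Import all_boot all_order all_algebra all_field.
From mathcomp Require Import boolp classical_sets filter reals exp topology normedtype sequences.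
Import numFieldNormedType.Exports.
From mathcomp Require Import complex.
From mathcomp Require Import ring lra.
Import Order.TTheory GRing.Theory Num.Theory.
Set Implicit Arguments. Unset Strict Implicit. Unset Printing Implicit Defensive.
Local Open Scope classical_set_scope.
Local Open Scope ring_scope.
Local Open Scope complex_scope.

Fixpoint opDb_cofactor {T : comNzRingType} (a b : {poly T}) (n l k : nat) : {poly T} :=
  if k is k'.+1 then
    let G := opDb_cofactor a b n l k' in (a^`() *+ (n - k') + b) * G + a * G^`()
  else 'X^l.

Lemma iter_opDb (K : fieldType) (a b : {poly K}) n l k : a != 0 -> (k <= n)%N ->
  iter k (opDb a b) (a ^+ n * 'X^l) = a ^+ (n - k) * opDb_cofactor a b n l k.
Proof.
move=> a0; elim: k => [|k IH] kn; first by rewrite subn0.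
rewrite iterS IH ?(ltnW kn) // /opDb /=.
have -> : (n - k = (n - k.+1).+1)%N by rewrite subnS prednK // subn_gt0.
set j := (n - k.+1)%N; set G := opDb_cofactor a b n l k.
have -> : b * (a ^+ j.+1 * G) = (b * a ^+ j * G) * a by rewrite exprSr; ring.
by rewrite mulpK // derivM deriv_exp exprSr; ring.
Qed.

(* For [b = S a'] the operator [d/dz + b/a] is conjugate to [d/dz] by [a^S]. *)
Lemma opDb_cofactor_derivn (T : comNzRingType) (A : {poly T}) S n l k : (k <= n)%N ->
  A ^+ S * A ^+ (n - k) * opDb_cofactor A (A^`() *+ S) n l k = (A ^+ (n + S) * 'X^l)^`(k).
Proof.
elim: k => [|k IH] kn; first by rewrite subn0 -exprD addnC.
rewrite derivnS -IH ?(ltnW kn) //=.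
have -> : (n - k = (n - k.+1).+1)%N by rewrite subnS prednK // subn_gt0.
rewrite -!exprD derivM deriv_exp addnS exprSr -mulrnDr addSn addnC.
ring.
Qed.

Lemma Pnl_cofactor (K : fieldType) (a b : {poly K}) n l : a != 0 ->
  Pnl a b n l = n`!%:R^-1 *: opDb_cofactor a b n l n.
Proof. by move=> a0; rewrite /Pnl iter_opDb // subnn expr0 mul1r. Qed.

Lemma map_Pnl (K L : fieldType) (f : {rmorphism K -> L}) (a b : {poly K}) n l :
  map_poly f (Pnl a b n l) = Pnl (map_poly f a) (map_poly f b) n l.
Proof.
have map_opDb G : map_poly f (opDb a b G) = opDb (map_poly f a) (map_poly f b) (map_poly f G).
  by rewrite /opDb rmorphD /= map_divp rmorphM deriv_map.
have map_iter F k : map_poly f (iter k (opDb a b) F) =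
    iter k (opDb (map_poly f a) (map_poly f b)) (map_poly f F).
  by elim: k => //= k IH; rewrite map_opDb IH.
by rewrite /Pnl linearZ /= fmorphV rmorph_nat map_iter rmorphM rmorphXn /= map_polyXn.
Qed.

Lemma bin_leq_exp2 N k : ('C(N, k) <= 2 ^ N)%N.
Proof.
elim: N k => [|N IH] [|k] //; first by rewrite bin0 expn_gt0.
by rewrite binS expnS mul2n -addnn leq_add.
Qed.

Section Majorization.
Variable C : numDomainType.
Implicit Types p q a b A B : {poly C}.

(* [majorized q q] says that [q] has nonnegative coefficients. *)
Definition majorized p q := forall j, `|p`_j| <= q`_j.

Lemma majorized_ge0 {p q} j : majorized p q -> 0 <= q`_j.
Proof. by move=> pq; apply: le_trans (pq j). Qed.

Lemma majorant_self p q : majorized p q -> majorized q q.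
Proof. by move=> pq j; rewrite ger0_norm // (majorized_ge0 _ pq). Qed.

Lemma majorizedD p1 q1 p2 q2 :
  majorized p1 q1 -> majorized p2 q2 -> majorized (p1 + p2) (q1 + q2).
Proof. by move=> h1 h2 j; rewrite !coefD (le_trans (ler_normD _ _)) // lerD. Qed.

Lemma majorizedM p1 q1 p2 q2 :
  majorized p1 q1 -> majorized p2 q2 -> majorized (p1 * p2) (q1 * q2).
Proof.
move=> h1 h2 j; rewrite !coefM (le_trans (ler_norm_sum _ _ _)) //.
by apply: ler_sum => i _; rewrite normrM ler_pM.
Qed.

Lemma majorizedMn p q k : majorized p q -> majorized (p *+ k) (q *+ k).
Proof. by move=> pq j; rewrite !coefMn normrMn lerMn2r pq orbT. Qed.

Lemma majorized_deriv p q : majorized p q -> majorized p^`() q^`().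
Proof. by move=> pq j; rewrite !coef_deriv normrMn lerMn2r pq orbT. Qed.

Lemma majorizedXn l : majorized 'X^l 'X^l.
Proof. by move=> j; rewrite coefXn; case: (j == l); rewrite ?normr1 ?normr0. Qed.

Lemma majorizedX p q k : majorized p q -> majorized (p ^+ k) (q ^+ k).
Proof.
move=> pq; elim: k => [|k IH]; first by rewrite !expr0 -(expr0 'X); apply: majorizedXn.
by rewrite !exprS; apply: majorizedM.
Qed.

Lemma majorized_opDb_cofactor a b A B n l k :
  majorized a A -> majorized b B ->
  majorized (opDb_cofactor a b n l k) (opDb_cofactor A B n l k).
Proof.
move=> aA bB; elim: k => [|k IH] /=; first exact: majorizedXn.
apply: majorizedD; apply: majorizedM => //; try exact: majorized_deriv.
by apply: majorizedD bB; apply/majorizedMn/majorized_deriv.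
Qed.

Lemma majorized_prod_XsubC m (x c : 'I_m -> C) : (forall i, `|x i| <= c i) ->
  majorized (\prod_(i < m) ('X - (x i)%:P)) (\prod_(i < m) ('X + (c i)%:P)).
Proof.
move=> xc; apply: (big_ind2 majorized) => [|p1 q1 p2 q2|i _]; last 1 first.
- move=> [|[|j]]; rewrite !coefD !coefX !coefN !coefC //=.
  + by rewrite sub0r add0r normrN xc.
  + by rewrite subr0 addr0 normr1.
  + by rewrite subr0 addr0 normr0.
- by rewrite -(expr0 'X); apply: majorizedXn.
- exact: majorizedM.
Qed.

Lemma majorized_prod_XaddC m (c : 'I_m -> C) : (forall i, 0 <= c i) ->
  majorized (\prod_(i < m) ('X + (c i)%:P)) (\prod_(i < m) ('X + (c i)%:P)).
Proof.
move=> c0; apply: (@majorant_self (\prod_(i < m) ('X - (- c i)%:P))).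
by apply: majorized_prod_XsubC => i; rewrite normrN ger0_norm.
Qed.

Lemma coef_prod_XaddC_ge1 m (c : 'I_m -> C) j : (forall i, 1 <= c i) -> (j <= m)%N ->
  1 <= (\prod_(i < m) ('X + (c i)%:P))`_j.
Proof.
elim: m c j => [|m IH] c j c1 jm; first by case: j jm => // _; rewrite big_ord0 coef1.
have c0 i : 0 <= c i by apply: le_trans (c1 i).
have nonneg := @majorized_prod_XaddC m (fun i => c (widen_ord (leqnSn m) i)) (fun i => c0 _).
rewrite big_ord_recr /= mulrDr coefD coefMX coefMC.
case: j jm => [|j] jm /=; first by rewrite add0r mulr_ege1 ?IH.
rewrite (le_trans (IH _ j (fun i => c1 (widen_ord (leqnSn m) i)) jm)) // lerDl.
by rewrite mulr_ge0 ?(majorized_ge0 _ nonneg).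
Qed.

Lemma coef_le_horner1 {q} j : majorized q q -> q`_j <= q.[1].
Proof.
move=> qq; rewrite horner_coef.
have summand_ge0 (i : 'I_(size q)) : 0 <= q`_i * 1 ^+ i.
  by rewrite expr1n mulr1 (majorized_ge0 _ qq).
have [jq|qj] := ltnP j (size q); last by rewrite nth_default //; apply: sumr_ge0.
by rewrite (bigD1 (Ordinal jq)) //= expr1n mulr1 lerDl; apply: sumr_ge0.
Qed.

Lemma coef_nderivn_le q n k : majorized q q -> (q^`N(n))`_k <= q.[1] *+ 2 ^ size q.
Proof.
move=> qq; have q1_ge0 : 0 <= q.[1] := le_trans (majorized_ge0 0 qq) (coef_le_horner1 0 qq).
rewrite coef_nderivn; have [kq|qk] := ltnP (n + k) (size q); last first.
  by rewrite nth_default // mul0rn mulrn_wge0.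
apply: le_trans (ler_wMn2r _ (coef_le_horner1 _ qq)) _.
by apply: ler_wpMn2l => //; rewrite (leq_trans (bin_leq_exp2 _ _)) // leq_exp2l // ltnW.
Qed.

Lemma coef_le_coefM p q k : majorized p p -> majorized q q -> 1 <= p`_0 ->
  q`_k <= (p * q)`_k.
Proof.
move=> pp qq p0; rewrite coefM big_ord_recl /= subn0.
apply: (@le_trans _ _ (p`_0 * q`_k)); first by rewrite ler_peMl ?(majorized_ge0 _ qq).
rewrite lerDl; apply: sumr_ge0 => i _.
by rewrite mulr_ge0 ?(majorized_ge0 _ pp) ?(majorized_ge0 _ qq).
Qed.

Lemma majorized_derivMn b A m s : (size b <= m)%N -> (forall j, `|b`_j| <= s%:R) ->
  majorized A A -> (forall j, (j <= m)%N -> 1 <= A`_j) -> majorized b (A^`() *+ s).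
Proof.
move=> bm bs AA A1 j; rewrite coefMn coef_deriv.
have [jm|mj] := ltnP j m; last first.
  by rewrite nth_default ?normr0 ?mulrn_wge0 ?(majorized_ge0 _ AA) // (leq_trans bm).
apply: le_trans (bs j) (ler_wMn2r s _); apply: le_trans (A1 _ jm) _.
by rewrite -[X in X <= _]mulr1n; apply: ler_wpMn2l; rewrite ?(majorized_ge0 _ AA).
Qed.

End Majorization.

Lemma norm_coef_Pnl_le (C : numFieldType) (a b A : {poly C}) S n l k :
    a != 0 -> majorized a A -> majorized b (A^`() *+ S) -> 1 <= A`_0 ->
  `|(Pnl a b n l)`_k| <= A.[1] ^+ (n + S) *+ 2 ^ ((size A).-1 * (n + S) + l.+1).
Proof.
move=> a0 aA bB A0; set G := opDb_cofactor A (A^`() *+ S) n l n.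
set Q := A ^+ (n + S) * 'X^l.
have AA := majorant_self aA.
have aG : majorized (opDb_cofactor a b n l n) G by apply: majorized_opDb_cofactor.
have QQ : majorized Q Q by apply: majorizedM; [apply: majorizedX | apply: majorizedXn].
have nf0 : n`!%:R != 0 :> C by rewrite pnatr_eq0 -lt0n fact_gt0.
have derivn_Q : Q^`(n) = A ^+ S * G.
  by rewrite /Q -(opDb_cofactor_derivn A S l (leqnn n)) subnn expr0 mulr1.
have coef_nderivn_Q j : n`!%:R^-1 * (A ^+ S * G)`_j = (Q^`N(n))`_j.
  rewrite -derivn_Q nderivn_def coefMn -(mulr_natr (Q^`N(n))`_j).
  by rewrite mulrCA mulVf ?mulr1.
have Q1 : Q.[1] = A.[1] ^+ (n + S) by rewrite hornerM hornerXn expr1n mulr1 horner_exp.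
have sizeQ : (size Q <= (size A).-1 * (n + S) + l.+1)%N.
  rewrite (leq_trans (size_polyMleq _ _)) // size_polyXn addnS /=.
  by rewrite addnS -addSn leq_add2r size_poly_exp_leq.
have G_le_AG j : G`_j <= (A ^+ S * G)`_j.
  apply: coef_le_coefM (majorant_self aG) _; first exact: majorizedX.
  by rewrite -horner_coef0 horner_exp horner_coef0 exprn_ege1.
rewrite Pnl_cofactor // coefZ normrM normfV normr_nat.
apply: le_trans (_ : n`!%:R^-1 * (A ^+ S * G)`_k <= _).
  by rewrite ler_wpM2l ?invr_ge0 // (le_trans (aG k)).
rewrite coef_nderivn_Q (le_trans (coef_nderivn_le n k QQ)) // -Q1.
by apply: ler_wpMn2l; rewrite ?leq_exp2l // (le_trans (majorized_ge0 0 QQ)) ?coef_le_horner1.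
Qed.

Lemma norm_coef_Pnl_prod_XsubC_le (C : numFieldType) m (x g : 'I_m -> C) (b : {poly C})
    s n l k :
    (forall i, `|x i| <= g i) -> (forall i, 1 <= g i) ->
    (size b <= m)%N -> (forall j, `|b`_j| <= s%:R) ->
  `|(Pnl (\prod_(i < m) ('X - (x i)%:P)) b n l)`_k|
    <= (\prod_(i < m) (1 + g i)) ^+ (n + s) *+ 2 ^ (m * (n + s) + l.+1).
Proof.
move=> xg g1 bm bs; set A := \prod_(i < m) ('X + (g i)%:P).
have A1 j : (j <= m)%N -> 1 <= A`_j by move=> jm; apply: coef_prod_XaddC_ge1.
have AA : majorized A A by apply: majorized_prod_XaddC => i; apply: le_trans (g1 i).
have -> : \prod_(i < m) (1 + g i) = A.[1].
  by rewrite horner_prod; apply: eq_bigr => i _; rewrite hornerD hornerX hornerC.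
have sizeA : (size A).-1 = m.
  rewrite /A (eq_bigr (fun i => 'X - (- g i)%:P)) => [|i _]; last by rewrite polyCN opprK.
  by rewrite size_prod_XsubC /index_enum unlock /= -enumT size_enum_ord.
have a0 : \prod_(i < m) ('X - (x i)%:P) != 0 by rewrite monic_neq0 ?monic_prod_XsubC.
have aA := majorized_prod_XsubC xg.
have bB := majorized_derivMn bm bs AA A1.
by have := norm_coef_Pnl_le n l k a0 aA bB (A1 0%N isT); rewrite sizeA.
Qed.

Lemma normc_Re (R : rcfType) (x : R[i]) : `|x| = (complex.Re `|x|)%:C.
Proof. by rewrite normc_def. Qed.

Lemma Re_norm_ge0 (R : rcfType) (x : R[i]) : 0 <= complex.Re `|x|.
Proof. by have := normr_ge0 x; rewrite lecE => /andP[]. Qed.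

Lemma poly_coef_norm_bounded (R : realType) (p : {poly R[i]}) :
  exists s : nat, forall j, `|p`_j| <= s%:R.
Proof.
exists (\max_(j < size p) Num.bound (complex.Re `|p`_j|)%R)%N => j.
have [jp|pj] := ltnP j (size p); last by rewrite nth_default ?normr0.
rewrite normc_Re -(rmorph_nat (real_complex R)) lecR.
apply: le_trans (ltW (archi_boundP (Re_norm_ge0 _))) _.
by rewrite ler_nat (leq_bigmax (Ordinal jp)).
Qed.

Lemma ln_prod (R : realType) (I : Type) (r : seq I) (f : I -> R) :
  (forall i, 0 < f i) -> ln (\prod_(i <- r) f i) = \sum_(i <- r) ln (f i).
Proof.
move=> f0; elim: r => [|i r IH]; first by rewrite !big_nil ln1.
by rewrite !big_cons lnM ?posrE ?prodr_gt0 // IH.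
Qed.

Lemma ln_prod_1D_le (R : realType) m (g : 'I_m -> R) : (forall i, 1 <= g i) ->
  ln (\prod_(i < m) (1 + g i)) <= ln 2 *+ m + \sum_(i < m) ln (g i).
Proof.
move=> g1; have g0 i : 0 < g i by apply: lt_le_trans (g1 i).
apply: (@le_trans _ _ (ln (\prod_(i < m) (2 * g i)))).
  rewrite ler_ln ?posrE ?prodr_gt0 // => [|i _|i _]; rewrite ?addr_gt0 ?mulr_gt0 //.
  apply: ler_prod => i _; rewrite addr_ge0 ?(ltW (g0 i)) //=.
  by rewrite mulr_natl mulr2n lerD2r.
rewrite ln_prod => [|i]; last by rewrite mulr_gt0.
under eq_bigr => i _ do rewrite lnM ?posrE //.
by rewrite big_split /= sumr_const card_ord.
Qed.

Lemma ln_max1_powR (R : realType) (x e : R) : 0 <= x -> 0 <= e ->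
  ln (Num.max 1 (x `^ e)) = e * ln (Num.max 1 x).
Proof.
move=> x0 e0; have [x1|x1] := lerP x 1.
  have := ge0_ler_powR e0 x0 ler01 x1; rewrite powR1 => xe1.
  by rewrite !max_l // ln1 mulr0.
have := ge0_ler_powR e0 ler01 x0 (ltW x1); rewrite powR1 => xe1.
by rewrite !max_r ?(ltW x1) ?ln_powR.
Qed.

Lemma cvg_cst_divn (R : realType) (x : R) : (fun n : nat => x / n%:R) @ \oo --> (0 : R).
Proof.
rewrite -cvg_shiftS /=.
have := cvgM (cvg_cst x) (@cvg_harmonic R); rewrite mulr0; apply; exact: eventually_filter.
Qed.

Section Place.
Variables (R : realType) (K : fieldExtType rat) (iota : {rmorphism K -> R[i]}).

Definition max1_norm (x : K) := Num.max 1 (complex.Re `|iota x|).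

Lemma max1_norm_ge1 x : 1 <= max1_norm x.
Proof. by rewrite le_max lexx. Qed.

Lemma place_exp_ge0 : 0 <= place_exp iota.
Proof. by rewrite divr_ge0 ?ler0n. Qed.

Lemma hvE x : hv iota x = place_exp iota * ln (max1_norm x).
Proof. by rewrite /hv /absv ln_max1_powR ?Re_norm_ge0 ?place_exp_ge0. Qed.

Lemma ln_absv_natr k : ln (absv iota k%:R) = place_exp iota * ln k%:R.
Proof. by rewrite /absv rmorph_nat normr_nat -(rmorph_nat (real_complex R)) ln_powR. Qed.

Lemma ln_bigmax_polyabsv_le m (P : 'I_m -> {poly K}) (T : R) : 1 <= T ->
    (forall l k, complex.Re `|iota (P l)`_k| <= T) ->
  ln (\big[Num.max/0]_(l < m) polyabsv iota (P l)) <= place_exp iota * ln T.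
Proof.
move=> T1 PT; have T0 : 0 < T by apply: lt_le_trans T1.
rewrite -ln_powR; set M := \big[Num.max/0]_(l < m) _.
have [M0|M0] := lerP M 0; first by rewrite ln0 // ln_powR mulr_ge0 ?place_exp_ge0 ?ln_ge0.
rewrite ler_ln ?posrE ?powR_gt0 //.
apply: bigmax_le => [|l _]; first exact: powR_ge0.
apply: bigmax_le => [|k _]; first exact: powR_ge0.
by apply: ge0_ler_powR; rewrite ?place_exp_ge0 ?nnegrE ?Re_norm_ge0 ?(ltW T0).
Qed.

Lemma Re_norm_coef_Pnl_le m (alpha : 'I_m -> K) (b : {poly K}) s n l k :
    (size b <= m)%N -> (forall j, `|(map_poly iota b)`_j| <= s%:R) -> (l < m)%N ->
  complex.Re `|iota (Pnl (\prod_(i < m) ('X - (alpha i)%:P)) b n l)`_k|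
    <= (\prod_(i < m) (1 + max1_norm (alpha i))) ^+ (n + s) *+ 2 ^ (m * (n + s) + m).
Proof.
move=> bm bs lm; rewrite -lecR -normc_Re -coef_map map_Pnl rmorph_prod.
rewrite (eq_bigr _ (fun i _ => map_polyXsubC _ _)) /=.
set g := fun i => (max1_norm (alpha i))%:C.
have g1 i : 1 <= g i by rewrite -(rmorph1 (real_complex R)) lecR max1_norm_ge1.
apply: le_trans (norm_coef_Pnl_prod_XsubC_le n l k _ g1 _ bs) _.
- by move=> i; rewrite normc_Re lecR le_max lexx orbT.
- by rewrite size_map_poly.
rewrite rmorphMn rmorphXn rmorph_prod; under eq_bigr do rewrite rmorphD rmorph1.
apply: ler_wpMn2l; last by rewrite leq_exp2l // leq_add2l.
by rewrite exprn_ge0 // prodr_ge0 // => i _; rewrite addr_ge0 ?(le_trans ler01 (g1 i)).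
Qed.

End Place.

Lemma ln_majorant_le (R : realType) (P L : R) m N : 1 <= P -> ln P <= ln 2 *+ m + L ->
  ln (P ^+ N *+ 2 ^ (m * N + m)) <= N%:R * (L + m%:R * ln 4) + m%:R * ln 2.
Proof.
move=> P1 lnP; have P0 : 0 < P by apply: lt_le_trans P1.
have ln4 : ln 4 = ln 2 *+ 2 :> R by rewrite -lnXn // -natrX.
rewrite -mulr_natr lnM ?posrE ?exprn_gt0 ?ltr0n ?expn_gt0 // natrX !lnXn // ln4.
apply: le_trans (lerD (ler_wMn2r N lnP) (lexx _)) _.
have -> : (ln 2 *+ m + L) *+ N + ln 2 *+ (m * N + m) =
          N%:R * (L + m%:R * (ln 2 *+ 2)) + m%:R * ln 2 :> R by ring.
by [].
Qed.

Theorem lemma4p11 (R : realType) (K : fieldExtType rat) (m : nat)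
    (a b : {poly K}) (alpha : 'I_m -> K) (iota : {rmorphism K -> R[i]}) :
  (2 <= m)%N ->
  injective alpha ->
  a = \prod_(i < m) ('X - (alpha i)%:P) ->
  (size b <= m)%N ->
  (forall i : 'I_m, exists2 q : rat,
      b.[alpha i] / (a^`()).[alpha i] = ratr q &
      forall k : nat, q != - (k.+1)%:R) ->
  (forall k : nat, b`_m.-1 != - (k.+2)%:R) ->
  let c := \sum_(i < m) hv iota (alpha i) + m%:R * ln (absv iota 4) in
  exists g : nat -> R,
    (fun n : nat => g n / n%:R) @ \oo --> (0 : R) /\
    \forall n \near \oo,
      ln (\big[Num.max/0]_(l < m) polyabsv iota (Pnl a b n l))
        <= n%:R * c + g n.
Proof.
move=> _ _ -> size_b _ _ c; set e := place_exp iota.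
pose L := \sum_(i < m) ln (max1_norm iota (alpha i)).
pose P := \prod_(i < m) (1 + max1_norm iota (alpha i)).
have P1 : 1 <= P.
  apply: (big_ind (fun x => 1 <= x)) => // [x y|i _]; first exact: mulr_ege1.
  by rewrite lerDl (le_trans ler01 (max1_norm_ge1 _ _)).
have [s b_s] := poly_coef_norm_bounded (map_poly iota b).
have T1 n : 1 <= P ^+ (n + s) *+ 2 ^ (m * (n + s) + m).
  by rewrite -mulr_natr mulr_ege1 ?exprn_ege1 // ler1n expn_gt0.
have c_eq : c = e * (L + m%:R * ln 4).
  rewrite /c (eq_bigr _ (fun i _ => hvE iota (alpha i))) -mulr_sumr ln_absv_natr.
  by rewrite mulrDr mulrCA.
exists (fun=> e * (s%:R * (L + m%:R * ln 4) + m%:R * ln 2)).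
split; first exact: cvg_cst_divn.
apply: nearW => n; rewrite c_eq.
have coef_le (l : 'I_m) k := Re_norm_coef_Pnl_le alpha n k size_b b_s (ltn_ord l).
apply: le_trans (ln_bigmax_polyabsv_le (T1 n) coef_le) _.
have lnP := ln_prod_1D_le (fun i => max1_norm_ge1 iota (alpha i)).
apply: le_trans (ler_wpM2l (place_exp_ge0 iota) (ln_majorant_le _ P1 lnP)) _.
by rewrite natrD -/e -/L; lra.
Qed.
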